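(* $\kappa_4(S_4^2)\geqslant 10$ and $\kappa_5(S_4^2)\geqslant 12$.
   Context: For an integer $\ell\geqslant 2$, $\kappa_\ell(G)$ is the minimum number of vertices whose removal from $G$ results in a disconnected graph with at least $\ell$ components or a graph with fewer than $\ell$ vertices. $S_4^2$ is the split-star: vertex set all permutations $p=p_1p_2p_3p_4$ of $\{1,2,3,4\}$, with $p$ adjacent to $p\mathrm{g}_{12}$ (swap symbols at positions 1 and 2) and to $p\mathrm{g}_i^+$, $p\mathrm{g}_i^-$ for $i\in\{3,4\}$, where $p\mathrm{g}_i^+$ places $p_i,p_1,p_2$ at positions $1,2,i$ and $p\mathrm{g}_i^-$ places $p_2,p_i,p_1$ at positions $1,2,i$ (other positions unchanged). *)

From mathcomp Require Import all_boot all_fingroup.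
Set Implicit Arguments. Unset Strict Implicit. Unset Printing Implicit Defensive.

Section Kappa.
Variables (T : finType) (e : rel T).

Definition del_rel (S : {set T}) : rel T :=
  fun x y => [&& x \notin S, y \notin S & e x y].

Definition components (S : {set T}) : {set {set T}} :=
  [set [set y | (y \notin S) && connect (del_rel S) x y] | x in ~: S].

Definition lcut (l : nat) (S : {set T}) : bool :=
  (l <= #|components S|) || (#|~: S| < l).

(* kappa_l(G) : minimum size of such an S (the whole vertex set always qualifies
   when l >= 1) *)
Definition kappa (l : nat) : nat :=
  \big[minn/#|T|]_(S : {set T} | lcut l S) #|S|.
End Kappa.

(* vertices: permutations p of 'I_4; position i (1-based in the paper) is
   index i-1, and p_i is p (i-1); symbols {1,2,3,4} are relabelled {0,1,2,3}. *)
Definition posmap (l : seq nat) : 'I_4 -> 'I_4 := fun j => inord (nth 0 l j).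

Definition g12  := posmap [:: 1; 0; 2; 3].
Definition g3p  := posmap [:: 2; 0; 1; 3].
Definition g3m  := posmap [:: 1; 2; 0; 3].
Definition g4p  := posmap [:: 3; 0; 2; 1].
Definition g4m  := posmap [:: 1; 3; 2; 0].

Definition S42_adj : rel {perm 'I_4} :=
  fun p q => has (fun s : 'I_4 -> 'I_4 => [forall j, q j == p (s j)])
                 [:: g12; g3p; g3m; g4p; g4m].

(* Suppose deleting a set S of at most k vertices leaves at least l components,
   and colour the surviving vertices by component.  Take a smallest of l colour
   classes, C with t vertices.  Every neighbour of C outside C lies in S, so
   deleting C together with its neighbourhood N(C) leaves l - 1 classes, each
   still of size at least t, at the cost of |N(C)| of the k deletions; moreover
   |N(C)| <= k and t + |N(C)| + (l - 1) t <= |V|.  Iterating gives an exhaustive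
   search over candidate smallest classes, pruned by these two inequalities.
   For S_4^2 (24 vertices, adjacency computed from its five generators) it finds
   no configuration with (l, k) = (4, 9) or (5, 11); the kernel checks the
   search by evaluation. *)

From mathcomp Require Import all_boot all_fingroup zify.
Set Implicit Arguments. Unset Strict Implicit. Unset Printing Implicit Defensive.

Lemma uniq_perm_iota (s : seq nat) :
  uniq s -> (forall x, x \in s -> x < size s) -> perm_eq s (iota 0 (size s)).
Proof.
move=> s_uniq s_lt; apply: uniq_perm => //; first exact: iota_uniq.
have s_sub : {subset s <= iota 0 (size s)} by move=> x /s_lt; rewrite mem_iota.
by have [] := uniq_min_size s_uniq s_sub; rewrite size_iota.
Qed.

Lemma count_id_iota (s : seq bool) : count id s = count (nth false s) (iota 0 (size s)).
Proof. by rewrite -{1}(mkseq_nth false s) /mkseq count_map. Qed.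

Lemma count_filterC (T : Type) (a p : pred T) (s : seq T) :
  count a (filter p s) + count a (filter (predC p) s) = count a s.
Proof. by elim: s => //= x s <-; case: (p x) => /=; lia. Qed.

Lemma sub_in_count (T : eqType) (a1 a2 : pred T) (s : seq T) :
  {in s, subpred a1 a2} -> count a1 s <= count a2 s.
Proof.
move=> a12; rewrite (eq_in_count (a2 := predI a2 a1)) ?sub_count // => [x /andP[] //|x xs].
by apply/idP/andP => [a1x|[]//]; split=> //; exact: a12.
Qed.

Lemma exists_argmin (I : seq nat) (F : nat -> nat) (i0 : nat) :
  i0 \in I -> exists2 j, j \in I & {in I, forall i, F j <= F i}.
Proof.
move=> i0I; have hasF : exists t, has (fun i => F i == t) I.
  by exists (F i0); apply/hasP; exists i0.
have [t /hasP[j jI /eqP Fj] Fmin] := ex_minnP hasF.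
by exists j => // i iI; rewrite Fj; apply: Fmin; apply/hasP; exists i.
Qed.

Section PrunedSubsets.
Variables (T : eqType) (St : Type) (step : St -> T -> St) (ok : pred St).

Fixpoint pruned_subsets (t : nat) (st : St) (s : seq T) {struct s} : seq (seq T) :=
  if t is t'.+1 then
    if s is x :: s' then
      let st' := step st x in
      (if ok st' then map (cons x) (pruned_subsets t' st' s') else [::])
        ++ pruned_subsets t st s'
    else [::]
  else [:: [::]].

Lemma mem_pruned_subsets (s C : seq T) (st : St) :
  subseq C s -> (forall m, 0 < m <= size C -> ok (foldl step st (take m C))) ->
  C \in pruned_subsets (size C) st s.
Proof.
elim: s C st => [|x s IH] [|y C] st //=; rewrite ?mem_seq1 //.
case: eqP => [<-|_] sub_C ok_C; rewrite mem_cat; apply/orP.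
  left; have := ok_C 1 isT; rewrite /= take0 => ->.
  apply/map_f/IH => // m /andP[m_gt0 m_le]; exact: (ok_C m.+1).
by right; apply: (IH (y :: C)).
Qed.

End PrunedSubsets.

Section NeighbourhoodMask.
Variables (n : nat) (rows : seq (seq bool)).
Hypothesis size_rows : forall x, x < n -> size (nth [::] rows x) = n.

Definition adj_at (x y : nat) : bool := nth false (nth [::] rows x) y.

Definition mark (st : seq bool) (x : nat) : seq bool :=
  [seq b.1 || b.2 | b <- zip st (nth [::] rows x)].

Lemma nth_marks (st : seq bool) (D : seq nat) :
  size st = n -> all (gtn n) D ->
  size (foldl mark st D) = n /\
  forall y, y < n -> nth false (foldl mark st D) y = nth false st y || has (adj_at^~ y) D.
Proof.
elim: D st => [|x D IH] st /= st_n; first by split=> // y _; rewrite orbF.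
case/andP=> x_lt D_lt.
have mark_n : size (mark st x) = n by rewrite size_map size_zip st_n size_rows // minnn.
have [-> nthE] := IH _ mark_n D_lt; split=> // y y_lt.
by rewrite nthE // (nth_map (false, false)) ?nth_zip ?size_zip ?st_n ?size_rows ?minnn // orbA.
Qed.

Lemma count_marks (V D : seq nat) :
  subseq V (iota 0 n) -> all (gtn n) D ->
  count id (foldl mark (mkseq (fun y => y \notin V) n) D)
    = n - size V + count (fun y => has (adj_at^~ y) D) V.
Proof.
move=> V_sub D_lt.
have [size_st nthE] := nth_marks (size_mkseq (fun y => y \notin V) n) D_lt.
have V_eq : V = filter (mem V) (iota 0 n) := elimT (subseq_uniqP (iota_uniq 0 n)) V_sub.
have sizeVC : size (filter (predC (mem V)) (iota 0 n)) = n - size V.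
  have := count_predC (mem V) (iota 0 n).
  rewrite size_iota -size_filter -V_eq size_filter.
  by move=> /(congr1 (subn^~ (size V))); rewrite addKn.
rewrite count_id_iota size_st -(count_filterC _ (mem V)) -V_eq -sizeVC -count_predT addnC.
congr (_ + _); apply: eq_in_count => y.
  by rewrite mem_filter mem_iota => /andP[/= yV y_lt]; rewrite nthE // nth_mkseq // yV.
move=> yV; have y_lt : y < n by move: yV; rewrite V_eq mem_filter mem_iota => /andP[_ /andP[]].
by rewrite nthE // nth_mkseq // yV.
Qed.

End NeighbourhoodMask.

Definition in_class (S : pred nat) (c : nat -> nat) (i : nat) : pred nat :=
  fun x => ~~ S x && (c x == i).

Lemma count_classes (S : pred nat) (c : nat -> nat) (I V : seq nat) (t : nat) :
  uniq I -> {in I, forall i, t <= count (in_class S c i) V} ->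
  size I * t <= count (predC S) V.
Proof.
move=> I_uniq I_big; apply: (@leq_trans (count (fun x => ~~ S x && (c x \in I)) V)).
  2: by apply: sub_count => x /andP[].
elim: I I_uniq I_big => [|i I IH] //= /andP[iI I_uniq] I_big.
have disjoint : count (predI (in_class S c i) (fun x => ~~ S x && (c x \in I))) V = 0.
  rewrite (eq_count (a2 := pred0)) ?count_pred0 // => x /=.
  by rewrite /in_class; case: eqP => [->|]; rewrite ?(negbTE iI) ?andbF.
rewrite mulSn (eq_count (a2 := predU (in_class S c i) (fun x => ~~ S x && (c x \in I)))).
  rewrite -[count (predU _ _) V]addn0 -disjoint count_predUI.
  by rewrite leq_add ?I_big ?mem_head // IH // => i' i'I; rewrite I_big // inE i'I orbT.
by move=> x; rewrite /= inE /in_class andb_orr.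
Qed.

Section SplitFree.
Variables (n : nat) (rows : seq (seq bool)).
Hypothesis size_rows : forall x, x < n -> size (nth [::] rows x) = n.

Local Notation adj := (adj_at rows).
Local Notation mark := (mark rows).

Definition nbh (C V : seq nat) : seq nat := [seq y <- V | (y \notin C) && has (adj^~ y) C].

(* A smallest class C, of size t, has its neighbourhood inside C and the cut
   and disjoint from the l other classes, each of size at least t; by
   [count_marks] this bounds the count of the mask of every prefix of C. *)
Definition candidates (l t k : nat) (V : seq nat) : seq (seq nat) :=
  pruned_subsets mark (fun st => count id st <= minn (n - t * l) (n + t + k - size V))
    t (mkseq (fun y => y \notin V) n) V.

Fixpoint split_free (l : nat) (V : seq nat) (k mn : nat) : bool :=
  if l is l'.+1 then
    all (fun t => (size V < t * l.+1) ||
           all (fun C => let N := nbh C V in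
                  (k < size N) ||
                  split_free l' [seq y <- V | (y \notin C) && (y \notin N)] (k - size N) t)
               (candidates l t k V))
        (iota mn (size V).+1)
  else size V < mn.

Section Colouring.
Variables (S : pred nat) (c : nat -> nat) (V : seq nat).
Hypothesis c_closed : {in V &, forall x y, ~~ S x -> ~~ S y -> adj x y -> c x = c y}.

Lemma nbh_class_S (j : nat) : {in nbh (filter (in_class S c j) V) V, forall y, S y}.
Proof.
move=> y; rewrite mem_filter => /andP[/andP[yC /hasP[x xC xy]] yV].
move: (xC); rewrite mem_filter => /andP[/andP[Sx /eqP cx] xV].
apply: contraR yC => Sy; rewrite mem_filter yV andbT /in_class Sy.
by rewrite -(c_closed xV yV Sx Sy xy) cx eqxx.
Qed.

Lemma class_in_candidates (l j k : nat) :
  let C := filter (in_class S c j) V in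
  subseq V (iota 0 n) -> size (nbh C V) <= k ->
  size C * l.+1 + size (nbh C V) <= size V ->
  C \in candidates l (size C) k V.
Proof.
move=> C V_sub N_k V_big; apply: mem_pruned_subsets; first exact: filter_subseq.
have C_lt : all (gtn n) C.
  apply/allP => x /(mem_subseq (filter_subseq _ _)) /(mem_subseq V_sub).
  by rewrite mem_iota.
move=> m _; rewrite count_marks //; last first.
  by apply/allP => x /mem_take /(allP C_lt).
have V_n : size V <= n by rewrite -(size_iota 0 n); apply: size_subseq.
have nbh_take : count (fun y => has (adj^~ y) (take m C)) V <= size C + size (nbh C V).
  apply: (@leq_trans (count (fun y => has (adj^~ y) C) V)).
    by apply: sub_count => y /hasP[x /mem_take xC xy]; apply/hasP; exists x.
  rewrite -(count_filterC _ (mem C)); apply: leq_add.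
    apply: leq_trans (count_size _ _) _; rewrite size_filter [X in _ <= X]size_filter.
    by apply: sub_count => y /=; rewrite /C mem_filter => /andP[].
  by rewrite count_filter size_filter; apply/eq_leq/eq_count => y; rewrite /= andbC.
apply: leq_trans (leq_add (leqnn _) nbh_take) _.
rewrite mulnS in V_big; rewrite leq_min; apply/andP; split; lia.
Qed.

End Colouring.

Lemma split_free_sound (l : nat) (V : seq nat) (k mn : nat)
    (I : seq nat) (S : pred nat) (c : nat -> nat) :
  split_free l V k mn -> subseq V (iota 0 n) -> count S V <= k ->
  uniq I -> size I = l.+1 -> {in I, forall i, mn <= count (in_class S c i) V} ->
  {in V &, forall x y, ~~ S x -> ~~ S y -> adj x y -> c x = c y} -> False.
Proof.
elim: l V k mn I => [|l IH] V k mn I split_V V_sub S_k I_uniq I_size I_big c_closed.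
  case: I I_uniq I_size I_big => [|i [|]] //= _ _ /(_ i (mem_head _ _)) mn_le.
  by move: split_V; rewrite /= ltnNge (leq_trans mn_le (count_size _ _)).
have I0 : 0 < size I by rewrite I_size.
have [j jI j_min] := exists_argmin (fun i => count (in_class S c i) V) (mem_nth 0 I0).
set C := filter (in_class S c j) V; set N := nbh C V.
have N_S : {in N, forall y, S y} := nbh_class_S (j := j) c_closed.
have many_C : size C * l.+2 <= count (predC S) V.
  rewrite mulnC -I_size; apply: (count_classes (c := c)) => // i /j_min.
  by rewrite /C size_filter.
have S_split : count S [seq y <- V | (y \notin C) && (y \notin N)] + size N <= count S V.
  rewrite -[count S V](count_filterC S (fun y => (y \notin C) && (y \notin N))) leq_add2l.
  rewrite count_filter size_filter; apply: sub_in_count => y yV Py.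
  have yN : y \in N by rewrite mem_filter Py yV.
  by rewrite /= N_S // yN andbF.
have V_size := count_predC S V.
have C_in : size C \in iota mn (size V).+1.
  by rewrite mem_iota size_filter (leq_trans (I_big j jI)) //= ltn_addl // ltnS count_size.
have C_cand : C \in candidates l.+1 (size C) k V.
  by apply: class_in_candidates => //; rewrite -/C -/N; lia.
have := allP split_V _ C_in => /orP[|/allP /(_ C C_cand) /orP[|]].
- by rewrite ltnNge; lia.
- by rewrite -/N ltnNge; lia.
move=> split_rest; apply: (IH _ _ _ (rem j I) split_rest).
- exact: subseq_trans (filter_subseq _ _) V_sub.
- by rewrite -/N; lia.
- exact: rem_uniq.
- by rewrite size_rem // I_size.
- move=> i; rewrite mem_rem_uniq // => /andP[/= ij iI].
  rewrite count_filter (eq_in_count (a2 := in_class S c i)) => [|y _].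
    by rewrite /C size_filter j_min.
  apply/andP/idP => [[]//|yi]; split=> //; apply/andP; split.
    by rewrite mem_filter /in_class; move: yi => /andP[-> /eqP ->]; rewrite (negbTE ij).
  by apply: contraL yi => /N_S Sy; rewrite /in_class Sy.
- have V'_sub := mem_subseq (filter_subseq (fun y => (y \notin C) && (y \notin N)) V).
  by move=> x y /V'_sub xV /V'_sub yV; apply: c_closed.
Qed.

End SplitFree.

Definition adj_table (n : nat) (a : nat -> nat -> bool) : seq (seq bool) :=
  mkseq (fun x => mkseq (a x) n) n.

Lemma size_adj_table (n : nat) (a : nat -> nat -> bool) (x : nat) :
  x < n -> size (nth [::] (adj_table n a) x) = n.
Proof. by move=> x_lt; rewrite nth_mkseq // size_mkseq. Qed.

Lemma adj_tableE (n : nat) (a : nat -> nat -> bool) (x y : nat) :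
  x < n -> y < n -> adj_at (adj_table n a) x y = a x y.
Proof. by move=> x_lt y_lt; rewrite /adj_at !nth_mkseq. Qed.

Section Transfer.
Variables (T : finType) (g : rel T) (n : nat) (a : nat -> nat -> bool) (f : T -> nat).
Hypotheses (g_sym : symmetric g) (f_inj : injective f) (card_T : #|T| = n)
  (f_lt : forall x, f x < n) (a_g : forall x y, a (f x) (f y) -> x = y \/ g x y).

Lemma component_eq (S : {set T}) (x y : T) :
  x \notin S -> y \notin S -> g x y ->
  [set z | (z \notin S) && connect (del_rel g S) x z]
    = [set z | (z \notin S) && connect (del_rel g S) y z].
Proof.
move=> Sx Sy gxy; have Dxy : del_rel g S x y by rewrite /del_rel Sx Sy gxy.
have Dyx : del_rel g S y x by rewrite /del_rel Sx Sy g_sym gxy.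
apply/setP => z; rewrite !inE; case: (z \in S) => //=.
by apply/idP/idP => [/(connect_trans (connect1 Dyx))|/(connect_trans (connect1 Dxy))].
Qed.

Lemma perm_map_enum_iota : perm_eq (map f (enum T)) (iota 0 n).
Proof.
rewrite -card_T cardE -(size_map f); apply: uniq_perm_iota.
  by rewrite map_inj_uniq ?enum_uniq.
by move=> _ /mapP[x _ ->]; rewrite size_map -cardE card_T.
Qed.

Lemma iota_codom (i : nat) : i \in iota 0 n -> exists x, i = f x.
Proof. by rewrite -(perm_mem perm_map_enum_iota) => /mapP[x _ ->]; exists x. Qed.

Definition preimage (i : nat) : option T := [pick x | f x == i].

Lemma preimage_f (x : T) : preimage (f x) = Some x.
Proof.
rewrite /preimage; case: pickP => [y /eqP /f_inj -> //|/(_ x)].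
by rewrite eqxx.
Qed.

Lemma kappa_gt_of_split_free (l k : nat) :
  k + l < n -> split_free n (adj_table n a) l (iota 0 n) k 1 -> k < kappa g l.+1.
Proof.
move=> kl_lt split_T; rewrite /kappa; apply: (big_ind (fun m => k < m)) => [|x y|S cut_S].
- by rewrite card_T; lia.
- by rewrite leq_min => ->.
rewrite ltnNge; apply/negP => S_k.
have comps_l : l < #|components g S|.
  by move: cut_S; rewrite /lcut => /orP[//|]; have := cardsC S; rewrite card_T; lia.
pose comp x := [set y | (y \notin S) && connect (del_rel g S) x y].
pose cs := enum (components g S).
pose S' i := if preimage i is Some x then x \in S else true.
pose c i := if preimage i is Some x then index (comp x) cs else 0.
have S'_f x : S' (f x) = (x \in S) by rewrite /S' preimage_f.
have c_f x : c (f x) = index (comp x) cs by rewrite /c preimage_f.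
apply: (split_free_sound (S := S') (c := c) (@size_adj_table n a) split_T (subseq_refl _)
  _ (iota_uniq 0 l.+1) (size_iota _ _)) => [|i|i j].
- rewrite -(seq.permP perm_map_enum_iota) count_map (eq_count (a2 := mem S)).
    by rewrite enumT; move: S_k; rewrite cardE /enum_mem size_filter.
  by move=> x; rewrite /= S'_f.
- rewrite mem_iota add0n => /andP[_ i_lt]; rewrite -has_count.
  have i_cs : i < size cs by rewrite /cs -cardE (leq_trans i_lt comps_l).
  have /imsetP[x xS K_eq] : nth set0 cs i \in components g S by rewrite -mem_enum mem_nth.
  apply/hasP; exists (f x); first by rewrite mem_iota f_lt.
  rewrite /in_class S'_f c_f /comp -K_eq index_uniq ?enum_uniq // eqxx andbT.
  by rewrite inE in xS.
move=> /iota_codom[x ->] /iota_codom[y ->]; rewrite !S'_f c_f c_f => Sx Sy.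
by rewrite adj_tableE // => /a_g[-> //|gxy]; rewrite /comp (component_eq Sx Sy gxy).
Qed.

End Transfer.

Definition gens : seq (seq nat) :=
  [:: [:: 1; 0; 2; 3]; [:: 2; 0; 1; 3]; [:: 1; 2; 0; 3]; [:: 3; 0; 2; 1]; [:: 1; 3; 2; 0]].

Definition word (p : {perm 'I_4}) : seq nat := [seq val (p i) | i <- enum 'I_4].

Definition word_adj (u w : seq nat) : bool := has (fun s => w == map (nth 0 u) s) gens.

Definition words : seq (seq nat) := permutations (iota 0 4).

Definition word_index (p : {perm 'I_4}) : nat := index (word p) words.

(* The loops make the masks record closed neighbourhoods, which sharpens the
   pruning in [candidates]. *)
Definition index_adj (i j : nat) : bool :=
  (i == j) || word_adj (nth [::] words i) (nth [::] words j).

Lemma size_word (p : {perm 'I_4}) : size (word p) = 4.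
Proof. by rewrite size_map size_enum_ord. Qed.

Lemma nth_word (p : {perm 'I_4}) (i : 'I_4) : nth 0 (word p) i = p i.
Proof. by rewrite (nth_map ord0) ?size_enum_ord // nth_ord_enum. Qed.

Lemma word_inj : injective word.
Proof. by move=> p q eq_pq; apply/permP => i; apply: val_inj; rewrite /= -!nth_word eq_pq. Qed.

Lemma word_in_words (p : {perm 'I_4}) : word p \in words.
Proof.
rewrite mem_permutations; have := @uniq_perm_iota (word p); rewrite size_word; apply.
  by rewrite map_inj_uniq ?enum_uniq // => i j /val_inj /perm_inj.
by move=> _ /mapP[i _ ->]; rewrite ltn_ord.
Qed.

Lemma card_perm4 : #|{perm 'I_4}| = 24.
Proof. by rewrite card_Sn. Qed.

Lemma word_index_lt (p : {perm 'I_4}) : word_index p < 24.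
Proof.
by rewrite -[24](size_permutations (iota_uniq 0 4)) index_mem word_in_words.
Qed.

Lemma word_index_inj : injective word_index.
Proof.
move=> p q /(congr1 (nth [::] words)).
by rewrite !nth_index ?word_in_words // => /word_inj.
Qed.

Lemma forall_word (p q : {perm 'I_4}) (sigma : 'I_4 -> 'I_4) :
  [forall j, q j == p (sigma j)] = (word q == [seq val (p (sigma i)) | i <- enum 'I_4]).
Proof.
apply/forallP/eqP => [qp | /eq_in_map qp j].
  by apply/eq_map => j /=; rewrite (eqP (qp j)).
by apply/eqP/val_inj; apply: qp; rewrite mem_enum.
Qed.

Lemma word_posmap (p : {perm 'I_4}) (s : seq nat) :
  size s = 4 -> all (gtn 4) s ->
  map (nth 0 (word p)) s = [seq val (p (posmap s i)) | i <- enum 'I_4].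
Proof.
move=> s_size s_lt.
rewrite -{1}[s](mkseq_nth 0) s_size /mkseq -val_enum_ord -!map_comp.
apply: eq_map => i /=; rewrite -nth_word /posmap inordK //.
by apply: (allP s_lt); rewrite mem_nth ?s_size.
Qed.

Lemma S42_adj_word (p q : {perm 'I_4}) : S42_adj p q = word_adj (word p) (word q).
Proof.
have gens_ok : all (fun s => (size s == 4) && all (gtn 4) s) gens by [].
rewrite /S42_adj /word_adj (_ : [:: g12; g3p; g3m; g4p; g4m] = map posmap gens) //.
rewrite has_map; apply: eq_in_has => s /(allP gens_ok) /andP[/eqP s_size s_lt] /=.
by rewrite forall_word word_posmap.
Qed.

Lemma S42_adj_sym : symmetric S42_adj.
Proof.
have words_sym : all (fun u => all (fun w => word_adj u w == word_adj w u) words) words.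
  by vm_compute.
move=> p q; rewrite !S42_adj_word.
by apply/eqP; apply: (allP (allP words_sym _ (word_in_words p))); exact: word_in_words.
Qed.

Lemma index_adj_word (p q : {perm 'I_4}) :
  index_adj (word_index p) (word_index q) -> p = q \/ S42_adj p q.
Proof.
rewrite /index_adj !nth_index ?word_in_words // -S42_adj_word.
by case/orP => [/eqP /word_index_inj ->|]; [left | right].
Qed.

Lemma split_free_S42_3_9 : split_free 24 (adj_table 24 index_adj) 3 (iota 0 24) 9 1.
Proof. vm_cast_no_check (erefl true). Qed.

Lemma split_free_S42_4_11 : split_free 24 (adj_table 24 index_adj) 4 (iota 0 24) 11 1.
Proof. vm_cast_no_check (erefl true). Qed.

Theorem lemma19 :
  10 <= kappa S42_adj 4 /\ 12 <= kappa S42_adj 5.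
Proof.
have kappa_gt := kappa_gt_of_split_free S42_adj_sym word_index_inj card_perm4
  word_index_lt index_adj_word.
by split; apply: kappa_gt; [| exact: split_free_S42_3_9 | | exact: split_free_S42_4_11].
Qed.
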